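(* Let $A$ be an $n\times n$ Hermitian matrix ($n\ge2$) with eigenvalues $\lambda_1\ge\dots\ge\lambda_n$ and corresponding orthonormal eigenvectors $v_1,\dots,v_n$. Let $u\in\mathbb C^n$ be a unit vector, and let $\mu_1\ge\dots\ge\mu_{n-1}$ be the eigenvalues of the compression $B=P_uAP_u|_{u^\perp}$, $P_u=I-uu^*$. Set $U_\ell(u):=\sum_{i=\ell}^n|\langle u,v_i\rangle|^2$ and $L_{r+1}(u):=\sum_{i=1}^{r+1}|\langle u,v_i\rangle|^2$. Then for all $1\le\ell\le r\le n-1$ with $U_\ell(u)\ne0$ and $L_{r+1}(u)\ne0$, $$\sum_{j=\ell}^r\lambda_{j+1}+\sum_{j=\ell}^r\frac{|\langle u,v_{j+1}\rangle|^2}{L_{r+1}(u)}(\lambda_\ell-\lambda_{j+1})\le\sum_{j=\ell}^r\mu_j\le\sum_{j=\ell}^r\lambda_j-\sum_{j=\ell}^r\frac{|\langle u,v_j\rangle|^2}{U_\ell(u)}(\lambda_j-\lambda_{r+1}).$$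
   Context: $B$ is the compression of $A$ onto the hyperplane $u^\perp$, i.e. the operator $x\mapsto P_uAx$ on $u^\perp$ (equivalently $U^*AU$ for $U$ with orthonormal columns spanning $u^\perp$). *)

From HB Require Import structures.
From mathcomp Require Import all_boot all_order all_algebra.
Set Implicit Arguments. Unset Strict Implicit. Unset Printing Implicit Defensive.
Import Order.TTheory GRing.Theory Num.Theory.
Local Open Scope ring_scope.

Definition ctrmx (C : numClosedFieldType) m n (M : 'M[C]_(m, n)) : 'M[C]_(n, m) :=
  (map_mx Num.conj M)^T.

Definition cdot (C : numClosedFieldType) n (x y : 'cV[C]_n) : C :=
  (ctrmx y *m x) 0 0.

(* Compression of A onto the orthogonal complement of u, represented by
   U : 'M_(n, n-1) with orthonormal columns spanning u^perp:  B = U^* A U. *)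
Definition compression (C : numClosedFieldType) n (A : 'M[C]_n)
  (U : 'M[C]_(n, n.-1)) : 'M[C]_(n.-1) := ctrmx U *m A *m U.

From HB Require Import structures.
From mathcomp Require Import all_boot all_order all_algebra.
From mathcomp Require Import perm zify ring.

(* The compression B has an orthonormal eigenbasis y_1, ..., y_(n-1) of u^perp
   with eigenvalues mu_j.  For an orthonormal frame x_1, ..., x_k in u^perp with
   k = r - l + 1, the trace sum_a <A x_a, x_a> equals both sum_j mu_j e_j and
   sum_i lam_i c_i, where e_j = sum_a |<x_a, y_j>|^2 and c_i = sum_a |<x_a, v_i>|^2
   are weights in [0, 1] of total mass k.  A dimension count lets us take the frame
   orthogonal to y_1, ..., y_(l-1) and v_(r+2), ..., v_n (for the lower bound), or
   to v_1, ..., v_(l-1) and y_(r+1), ..., y_(n-1) (for the upper bound), which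
   confines both weight vectors to windows; an exchange argument then compares
   each weighted sum with a window sum.  The correction terms come from the sharper
   bound c_i <= 1 - |<u, v_i>|^2 / G on the window: the normalized projection of u
   onto the span of the admissible v_i is orthogonal to the frame, so Bessel's
   inequality for v_i still holds for the frame extended by it. *)

Set Implicit Arguments.
Unset Strict Implicit.
Unset Printing Implicit Defensive.
Import Order.TTheory GRing.Theory Num.Theory.
Local Open Scope ring_scope.

Section InnerProduct.
Context {C : numClosedFieldType} {n : nat}.
Implicit Types x y z : 'cV[C]_n.

Lemma cdotE x y : cdot x y = \sum_k x k 0 * (y k 0)^*.
Proof. by rewrite /cdot /ctrmx !mxE; apply: eq_bigr => k _; rewrite !mxE mulrC. Qed.

Lemma cdotC x y : cdot y x = (cdot x y)^*.
Proof.
rewrite !cdotE rmorph_sum; apply: eq_bigr => k _.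
by rewrite rmorphM /= conjCK mulrC.
Qed.

Lemma cdotDl x y z : cdot (x + y) z = cdot x z + cdot y z.
Proof. by rewrite !cdotE -big_split; apply: eq_bigr => k _; rewrite !mxE mulrDl. Qed.

Lemma cdotZl a x z : cdot (a *: x) z = a * cdot x z.
Proof. by rewrite !cdotE mulr_sumr; apply: eq_bigr => k _; rewrite !mxE mulrA. Qed.

Lemma cdotBl x y z : cdot (x - y) z = cdot x z - cdot y z.
Proof. by rewrite cdotDl -scaleN1r cdotZl mulN1r. Qed.

Lemma cdot0l z : cdot 0 z = 0.
Proof. by rewrite -(scale0r 0) cdotZl mul0r. Qed.

Lemma cdot_suml I (r : seq I) (P : pred I) (F : I -> 'cV[C]_n) z :
  cdot (\sum_(i <- r | P i) F i) z = \sum_(i <- r | P i) cdot (F i) z.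
Proof.
elim/big_rec2: _ => [|i y1 y2 _ <-]; first exact: cdot0l.
by rewrite cdotDl.
Qed.

Lemma cdotDr x y z : cdot z (x + y) = cdot z x + cdot z y.
Proof. by rewrite cdotC cdotDl rmorphD /= -!cdotC. Qed.

Lemma cdotZr a x z : cdot z (a *: x) = a^* * cdot z x.
Proof. by rewrite cdotC cdotZl rmorphM /= -cdotC. Qed.

Lemma cdotBr x y z : cdot z (x - y) = cdot z x - cdot z y.
Proof. by rewrite cdotDr -scaleN1r cdotZr rmorphN1 mulN1r. Qed.

Lemma cdot0r z : cdot z 0 = 0.
Proof. by rewrite cdotC cdot0l conjC0. Qed.

Lemma cdot_sumr I (r : seq I) (P : pred I) (F : I -> 'cV[C]_n) z :
  cdot z (\sum_(i <- r | P i) F i) = \sum_(i <- r | P i) cdot z (F i).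
Proof.
by rewrite cdotC cdot_suml rmorph_sum; apply: eq_bigr => i _; rewrite /= -cdotC.
Qed.

Lemma cdot_ge0 x : 0 <= cdot x x.
Proof. by rewrite cdotE; apply: sumr_ge0 => k _; rewrite -normCK exprn_ge0. Qed.

Lemma norm_cdotC x y : `|cdot y x| = `|cdot x y|.
Proof. by rewrite cdotC norm_conjC. Qed.

Definition orthonormal_upto k (f : nat -> 'cV[C]_n) :=
  forall a b, (a < k)%N -> (b < k)%N -> cdot (f a) (f b) = (a == b)%:R.

Lemma orthonormal_expand f : orthonormal_upto n f ->
  forall z, z = \sum_(i < n) cdot z (f i) *: f i.
Proof.
move=> hf z; pose F : 'M[C]_n := \matrix_(k, i) f i k 0.
have FtF : ctrmx F *m F = 1%:M.
  apply/matrixP => i j; rewrite !mxE eq_sym -(hf j i) // cdotE.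
  by apply: eq_bigr => k _; rewrite !mxE mulrC.
apply/matrixP => k c; rewrite (ord1 c).
have -> : z k 0 = (F *m (ctrmx F *m z)) k 0 by rewrite mulmxA mulmx1C // mul1mx.
rewrite summxE !mxE; apply: eq_bigr => i _; rewrite !mxE mulrC cdotE.
by congr (_ * _); apply: eq_bigr => j _; rewrite !mxE mulrC.
Qed.

Lemma orthonormal_parseval f : orthonormal_upto n f ->
  forall z, cdot z z = \sum_(i < n) `|cdot z (f i)| ^+ 2.
Proof.
move=> hf z; rewrite {1}(orthonormal_expand hf z) cdot_suml.
by apply: eq_bigr => i _; rewrite cdotZl normCK (cdotC z).
Qed.

Lemma bessel k f : orthonormal_upto k f ->
  forall z, \sum_(a < k) `|cdot z (f a)| ^+ 2 <= cdot z z.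
Proof.
move=> hf z; pose p : 'cV[C]_n := \sum_(a < k) cdot z (f a) *: f a.
have coef_p b : (b < k)%N -> cdot p (f b) = cdot z (f b).
  move=> hb; rewrite cdot_suml (bigD1 (Ordinal hb)) //= cdotZl hf // eqxx mulr1.
  rewrite big1 ?addr0 // => a hab; rewrite cdotZl hf //.
  suff /negbTE -> : val a != b by rewrite mulr0.
  by apply: contraNneq hab => ab; apply/eqP/val_inj.
have zp_p : cdot (z - p) p = 0.
  rewrite cdot_sumr big1 // => a _.
  by rewrite cdotZr cdotBl coef_p // subrr mulr0.
have -> : cdot z z = cdot (z - p) (z - p) + cdot p p.
  rewrite -[in LHS](subrK p z); move: (z - p) zp_p => w wp.
  by rewrite cdotDl !cdotDr wp (cdotC w p) wp conjC0 addr0 add0r.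
have -> : cdot p p = \sum_(a < k) `|cdot z (f a)| ^+ 2.
  rewrite {1}/p cdot_suml; apply: eq_bigr => a _.
  by rewrite cdotZl (cdotC p) coef_p // normCK.
by rewrite lerDr cdot_ge0.
Qed.

Lemma orthonormal_rcons k f z : orthonormal_upto k f -> cdot z z = 1 ->
  (forall a, (a < k)%N -> cdot (f a) z = 0) ->
  orthonormal_upto k.+1 (fun a => if (a < k)%N then f a else z).
Proof.
move=> hf hz hfz a b; rewrite !ltnS => ha hb.
case: ltnP => a_lt; case: ltnP => b_lt.
- exact: hf.
- have /negbTE -> : a != b by lia.
  by rewrite hfz.
- have /negbTE -> : a != b by lia.
  by rewrite cdotC hfz ?conjC0.
- have -> : a = b by lia.
  by rewrite hz eqxx.
Qed.

Definition normalize (g : 'cV[C]_n) := (sqrtC (cdot g g))^-1 *: g.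

Lemma cdot_normalize (b g : 'cV[C]_n) :
  cdot b (normalize g) = (sqrtC (cdot g g))^-1 * cdot b g.
Proof.
rewrite cdotZr fmorphV /= conj_Creal //.
by apply: ger0_real; rewrite sqrtC_ge0 cdot_ge0.
Qed.

Lemma normalize_unit (g : 'cV[C]_n) : cdot g g != 0 ->
  cdot (normalize g) (normalize g) = 1.
Proof.
move=> g0; rewrite cdot_normalize cdotZl mulrA -expr2 exprVn sqrtCK mulVf //.
Qed.

Lemma norm_cdot_normalize (b g : 'cV[C]_n) :
  `|cdot b (normalize g)| ^+ 2 = `|cdot b g| ^+ 2 / cdot g g.
Proof.
have s_ge0 : 0 <= sqrtC (cdot g g) by rewrite sqrtC_ge0 cdot_ge0.
rewrite cdot_normalize normrM exprMn normfV (ger0_norm s_ge0).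
by rewrite exprVn sqrtCK mulrC.
Qed.

Local Open Scope sesquilinear_scope.

Lemma exists_orthonormal_orthogonal (s : seq 'cV[C]_n) k : (size s + k <= n)%N ->
  exists f, orthonormal_upto k f /\
    forall a c, (a < k)%N -> c \in s -> cdot (f a) c = 0.
Proof.
case: k => [_|k hsk]; first by exists (fun=> 0); split.
(* Rows of an orthonormal basis of the left kernel of [M] are orthogonal to [s]. *)
pose M : 'M[C]_(n, size s) := \matrix_(i, t) (nth 0 s t i 0)^*.
have rank_ker : (k < \rank (kermx M))%N.
  by rewrite mxrank_ker; have := rank_leq_col M; lia.
pose R := schmidt (row_base (kermx M)).
have R_unitary : R \is unitarymx by apply/schmidt_unitarymx/rank_leq_col.
have R_ker : (R <= kermx M)%MS.
  by rewrite /R (eqmx_schmidt_free (row_base_free _)) eq_row_base.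
pose i0 := Ordinal (leq_ltn_trans (leq0n k) rank_ker).
have val_ins a : (a < k.+1)%N -> val (insubd i0 a) = a.
  by move=> ha; rewrite insubdK //; exact: leq_trans ha rank_ker.
exists (fun a => (row (insubd i0 a) R)^T); split.
  move=> a b ha hb; have /row_unitarymxP R_orth := R_unitary.
  rewrite (_ : a == b = (insubd i0 a == insubd i0 b)); last first.
    by rewrite -val_eqE /= !val_ins.
  rewrite -R_orth dotmxE cdotE !mxE; apply: eq_bigr => j _; by rewrite !mxE.
move=> a c ha /(nthP 0) [t ht <-].
have /sub_kermxP := submx_trans (row_sub (insubd i0 a) R) R_ker.
move=> /matrixP /(_ 0 (Ordinal ht)); rewrite !mxE => <-.
by rewrite cdotE; apply: eq_bigr => j _; rewrite !mxE.
Qed.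

End InnerProduct.

Section Compression.
Context {C : numClosedFieldType}.
Local Open Scope sesquilinear_scope.

Lemma ctrmxE m p (X : 'M[C]_(m, p)) : ctrmx X = X ^t*.
Proof. by rewrite /ctrmx map_trmx. Qed.

Lemma ctrmxM m p q (X : 'M[C]_(m, p)) (Y : 'M[C]_(p, q)) :
  ctrmx (X *m Y) = ctrmx Y *m ctrmx X.
Proof. by rewrite /ctrmx map_mxM trmx_mul. Qed.

Lemma ctrmxK m p (X : 'M[C]_(m, p)) : ctrmx (ctrmx X) = X.
Proof. by apply/matrixP => i j; rewrite !mxE conjCK. Qed.

Lemma cdot_col m p q (X : 'M[C]_(m, p)) (Z : 'M[C]_(m, q)) i j :
  cdot (col j X) (col i Z) = (ctrmx Z *m X) i j.
Proof. by rewrite cdotE !mxE; apply: eq_bigr => k _; rewrite !mxE mulrC. Qed.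

Lemma char_poly_conj m (Q D R : 'M[C]_m) : R *m Q = 1%:M ->
  char_poly (Q *m D *m R) = char_poly D.
Proof.
move=> RQ; have QR : Q *m R = 1%:M by apply: mulmx1C.
rewrite /char_poly /char_poly_mx.
set Q' := map_mx polyC Q; set R' := map_mx polyC R.
have Q'R' : Q' *m R' = 1%:M by rewrite -map_mxM QR map_mx1.
have R'Q' : R' *m Q' = 1%:M by rewrite -map_mxM RQ map_mx1.
have -> : 'X%:M - map_mx polyC (Q *m D *m R) = Q' *m ('X%:M - map_mx polyC D) *m R'.
  rewrite !map_mxM mulmxBr mulmxBl; congr (_ - _).
  by rewrite mul_mx_scalar -scalemxAl Q'R' scalemx1.
by rewrite !det_mulmx mulrC mulrA -det_mulmx R'Q' det1 mul1r.
Qed.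

Lemma compression_diagonalization n m (A : 'M[C]_n) (u : 'cV[C]_n)
    (U : 'M[C]_(n, m)) :
  ctrmx A = A -> ctrmx U *m U = 1%:M -> ctrmx U *m u = 0 ->
  exists (Y : 'M[C]_(n, m)) (d : 'rV[C]_m),
  [/\ ctrmx Y *m Y = 1%:M, ctrmx Y *m u = 0, ctrmx Y *m (A *m Y) = diag_mx d &
      char_poly (ctrmx U *m A *m U) = \prod_(i < m) ('X - (d 0 i)%:P)].
Proof.
move=> hA hU hUu; set B := ctrmx U *m A *m U.
have hB : ctrmx B = B by rewrite /B !ctrmxM ctrmxK hA mulmxA.
have B_normal : B \is normalmx by apply/normalmxP; rewrite -ctrmxE hB.
set P := spectralmx B; set d := spectral_diag B.
have PP : P *m ctrmx P = 1%:M by rewrite ctrmxE; apply/unitarymxP/spectral_unitarymx.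
have BE : B = ctrmx P *m diag_mx d *m P.
  by rewrite ctrmxE -invmx_unitary ?spectral_unitarymx //; apply/orthomx_spectralP.
have PP' : ctrmx P *m P = 1%:M by apply: mulmx1C.
pose Y := U *m ctrmx P.
exists Y, d; split.
- by rewrite /Y ctrmxM ctrmxK mulmxA -(mulmxA P) hU mulmx1 PP.
- by rewrite /Y ctrmxM ctrmxK -mulmxA hUu mulmx0.
- have -> : ctrmx Y *m (A *m Y) = P *m B *m ctrmx P.
    by rewrite /Y ctrmxM ctrmxK /B !mulmxA.
  by rewrite BE !mulmxA PP mul1mx -mulmxA PP mulmx1.
rewrite -/B BE char_poly_conj // char_poly_trig ?diag_mx_is_trig //.
by apply: eq_bigr => i _; rewrite !mxE eqxx.
Qed.

Lemma compression_eigenbasis n (A : 'M[C]_n) (u : 'cV[C]_n)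
    (U : 'M[C]_(n, n.-1)) (mu : nat -> C) :
  ctrmx A = A -> ctrmx U *m U = 1%:M -> ctrmx U *m u = 0 ->
  char_poly (compression A U) = \prod_(1 <= j < n) ('X - (mu j)%:P) ->
  exists y : nat -> 'cV[C]_n,
  [/\ forall j k, (1 <= j < n)%N -> (1 <= k < n)%N -> cdot (y j) (y k) = (j == k)%:R,
      forall j, (1 <= j < n)%N -> cdot (y j) u = 0 &
      forall j k, (1 <= j < n)%N -> (1 <= k < n)%N ->
        cdot (A *m y j) (y k) = (j == k)%:R * mu j].
Proof.
case: n A u U mu => [|[|m]] A u U mu hA hU hUu hmu;
  try by exists (fun=> 0); split=> j *; lia.
have [Y [d [YY Yu YAY chiB]]] := compression_diagonalization hA hU hUu.
have : perm_eq [tuple mu i.+1 | i < m.+1] [tuple d 0 i | i < m.+1].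
  apply: prod_XsubC_eq; rewrite !big_map.
  change (\prod_(i < m.+1) ('X - (mu i.+1)%:P) = \prod_(i < m.+1) ('X - (d 0 i)%:P)).
  by rewrite -chiB -[ctrmx U *m A *m U]/(compression A U) hmu big_add1 big_mkord.
case/tuple_permP => p hp.
have mu_d (i : 'I_m.+1) : mu i.+1 = d 0 (p i).
  have /(congr1 (nth 0 ^~ i)) := hp.
  by rewrite -!tnth_nth !tnth_map !tnth_ord_tuple.
pose idx j : 'I_m.+1 := p (inord j.-1).
have idx_eq j k : (1 <= j < m.+2)%N -> (1 <= k < m.+2)%N -> (idx k == idx j) = (j == k).
  move=> hj hk; rewrite (inj_eq perm_inj) -val_eqE /= !inordK; lia.
exists (fun j => col (idx j) Y); split.
- by move=> j k hj hk; rewrite cdot_col YY !mxE idx_eq.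
- move=> j hj; rewrite cdotC.
  have -> : cdot u (col (idx j) Y) = (ctrmx Y *m u) (idx j) 0.
    by rewrite cdotE !mxE; apply: eq_bigr => k _; rewrite !mxE mulrC.
  by rewrite Yu mxE conjC0.
- move=> j k hj hk; rewrite colE mulmxA -colE cdot_col YAY !mxE idx_eq //.
  case: eqP => [<-|]; last by rewrite mul0r.
  by rewrite mulr1n mul1r /idx -mu_d inordK; [case: j hj | lia].
Qed.

End Compression.

Lemma big_ord_drop0 (V : nmodType) n (F : nat -> V) :
  F 0%N = 0 -> \sum_(i < n) F i = \sum_(1 <= i < n) F i.
Proof.
move=> F0; case: n => [|n]; first by rewrite big_ord0 big_geq.
by rewrite big_ord_recl F0 add0r big_add1 big_mkord.
Qed.

Section Frame.
Variables (C : numClosedFieldType) (n : nat) (A : 'M[C]_n).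
Variables (lam mu : nat -> C) (v y : nat -> 'cV[C]_n) (u : 'cV[C]_n).
Hypothesis heig : forall i, (1 <= i <= n)%N -> A *m v i = lam i *: v i.
Hypothesis horth : forall i j, (1 <= i <= n)%N -> (1 <= j <= n)%N ->
  cdot (v i) (v j) = (i == j)%:R.
Hypothesis hu : cdot u u = 1.
Hypothesis hyy : forall j k, (1 <= j < n)%N -> (1 <= k < n)%N ->
  cdot (y j) (y k) = (j == k)%:R.
Hypothesis hyu : forall j, (1 <= j < n)%N -> cdot (y j) u = 0.
Hypothesis hyA : forall j k, (1 <= j < n)%N -> (1 <= k < n)%N ->
  cdot (A *m y j) (y k) = (j == k)%:R * mu j.

Lemma v_orthonormal : orthonormal_upto n (fun i => v i.+1).
Proof. by move=> i j hi hj; rewrite horth ?eqSS. Qed.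

Let uy j := if j == 0%N then u else y j.

Lemma uy_orthonormal : orthonormal_upto n uy.
Proof.
move=> [|i] [|j] hi hj //=.
- by rewrite cdotC hyu ?conjC0.
- by rewrite hyu.
- exact: hyy.
Qed.

Lemma expand_v z : z = \sum_(1 <= i < n.+1) cdot z (v i) *: v i.
Proof. by rewrite {1}(orthonormal_expand v_orthonormal z) big_add1 big_mkord. Qed.

Lemma parseval_v z : cdot z z = \sum_(1 <= i < n.+1) `|cdot z (v i)| ^+ 2.
Proof. by rewrite (orthonormal_parseval v_orthonormal z) big_add1 big_mkord. Qed.

Lemma cdot_expand_v (c : nat -> C) i : (1 <= i <= n)%N ->
  cdot (\sum_(1 <= j < n.+1) c j *: v j) (v i) = c i.
Proof.
move=> hi; rewrite cdot_suml (bigD1_seq i) ?mem_index_iota ?iota_uniq //=.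
rewrite cdotZl horth // eqxx mulr1 big1_seq ?addr0 // => j /andP[ji].
by rewrite mem_index_iota => hj; rewrite cdotZl horth // (negbTE ji) mulr0.
Qed.

Lemma expand_y z : cdot z u = 0 -> z = \sum_(1 <= j < n) cdot z (y j) *: y j.
Proof.
move=> zu; rewrite {1}(orthonormal_expand uy_orthonormal z).
rewrite (@big_ord_drop0 _ n (fun j => cdot z (uy j) *: uy j)) /uy;
  last by rewrite /uy zu scale0r.
by apply: eq_big_nat => -[].
Qed.

Lemma parseval_y z : cdot z u = 0 ->
  cdot z z = \sum_(1 <= j < n) `|cdot z (y j)| ^+ 2.
Proof.
move=> zu; rewrite (orthonormal_parseval uy_orthonormal z).
rewrite (@big_ord_drop0 _ n (fun j => `|cdot z (uy j)| ^+ 2)) /uy;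
  last by rewrite /uy zu normr0 expr0n.
by apply: eq_big_nat => -[].
Qed.

Lemma quad_v z : cdot (A *m z) z = \sum_(1 <= i < n.+1) lam i * `|cdot z (v i)| ^+ 2.
Proof.
rewrite {1}[z]expand_v mulmx_sumr cdot_suml; apply: eq_big_nat => i hi.
rewrite -scalemxAr heig // scalerA cdotZl (cdotC z) normCK.
by rewrite mulrAC mulrC.
Qed.

Lemma quad_y z : cdot z u = 0 ->
  cdot (A *m z) z = \sum_(1 <= j < n) mu j * `|cdot z (y j)| ^+ 2.
Proof.
move=> zu; rewrite {1}(expand_y zu) mulmx_sumr cdot_suml; apply: eq_big_nat => j hj.
rewrite -scalemxAr cdotZl [X in cdot (A *m _) X](expand_y zu) cdot_sumr.
rewrite (bigD1_seq j) ?mem_index_iota ?iota_uniq //= big1_seq.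
  by rewrite addr0 cdotZr hyA // eqxx mul1r normCK mulrA mulrC.
move=> k /andP[kj]; rewrite mem_index_iota => hk.
by rewrite cdotZr hyA // eq_sym (negbTE kj) mul0r mulr0.
Qed.

Variables (k : nat) (x : nat -> 'cV[C]_n).
Hypothesis hx : orthonormal_upto k x.
Hypothesis hxu : forall a, (a < k)%N -> cdot (x a) u = 0.

Definition frame_weight (b : 'cV[C]_n) := \sum_(a < k) `|cdot (x a) b| ^+ 2.

Lemma frame_weight_ge0 b : 0 <= frame_weight b.
Proof. by apply: sumr_ge0 => a _; apply: exprn_ge0. Qed.

Lemma frame_weight_le1 b : cdot b b = 1 -> frame_weight b <= 1.
Proof.
move=> b1; rewrite -b1 /frame_weight.
under eq_bigr do rewrite norm_cdotC.
exact: bessel.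
Qed.

Lemma frame_weight_eq0 b :
  (forall a, (a < k)%N -> cdot (x a) b = 0) -> frame_weight b = 0.
Proof. by move=> xb; apply: big1 => a _; rewrite xb // normr0 expr0n. Qed.

Lemma sum_frame_weight_v : \sum_(1 <= i < n.+1) frame_weight (v i) = k%:R.
Proof.
rewrite exchange_big /= -[k in RHS]card_ord -sumr_const.
by apply: eq_bigr => a _; rewrite -parseval_v hx // eqxx.
Qed.

Lemma sum_frame_weight_y : \sum_(1 <= j < n) frame_weight (y j) = k%:R.
Proof.
rewrite exchange_big /= -[k in RHS]card_ord -sumr_const.
by apply: eq_bigr => a _; rewrite -parseval_y ?hxu // hx // eqxx.
Qed.

Lemma frame_trace : \sum_(1 <= j < n) mu j * frame_weight (y j) =
  \sum_(1 <= i < n.+1) lam i * frame_weight (v i).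
Proof.
have trace_y : \sum_(a < k) cdot (A *m x a) (x a) =
    \sum_(1 <= j < n) mu j * frame_weight (y j).
  under eq_bigr => a _ do rewrite quad_y ?hxu //.
  by rewrite exchange_big; apply: eq_bigr => j _; rewrite mulr_sumr.
have trace_v : \sum_(a < k) cdot (A *m x a) (x a) =
    \sum_(1 <= i < n.+1) lam i * frame_weight (v i).
  under eq_bigr => a _ do rewrite quad_v.
  by rewrite exchange_big; apply: eq_bigr => i _; rewrite mulr_sumr.
by rewrite -trace_y trace_v.
Qed.

Lemma frame_weight_v_le (P : pred nat) :
  (forall a i, (a < k)%N -> (1 <= i <= n)%N -> ~~ P i -> cdot (x a) (v i) = 0) ->
  \sum_(1 <= i < n.+1) (P i)%:R * `|cdot u (v i)| ^+ 2 != 0 ->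
  forall i, (1 <= i <= n)%N -> P i ->
  frame_weight (v i) <= 1 - `|cdot u (v i)| ^+ 2 /
                          \sum_(1 <= i < n.+1) (P i)%:R * `|cdot u (v i)| ^+ 2.
Proof.
move=> hxv; set G := \sum_(1 <= i < n.+1) _ => G0 i hi Pi.
pose g := \sum_(1 <= j < n.+1) ((P j)%:R * cdot u (v j)) *: v j.
have g_coef j : (1 <= j <= n)%N -> cdot g (v j) = (P j)%:R * cdot u (v j).
  exact: cdot_expand_v.
have gG : cdot g g = G.
  rewrite parseval_v; apply: eq_big_nat => j hj; rewrite g_coef //.
  by case: (P j); rewrite ?mul1r ?mul0r ?normr0 ?expr0n.
have xg a : (a < k)%N -> cdot (x a) g = 0.
  move=> ha; have : cdot (x a) (u - g) = 0.
    rewrite {1}[u]expand_v -sumrB cdot_sumr big1_seq // => j /andP[_].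
    rewrite mem_index_iota => hj; case: (boolP (P j)) => /= Pj.
      by rewrite mul1r subrr cdot0r.
    by rewrite mul0r scale0r subr0 cdotZr hxv ?mulr0.
  by rewrite cdotBr hxu // sub0r => /eqP; rewrite oppr_eq0 => /eqP.
have g0 : cdot g g != 0 by rewrite gG.
have xz a : (a < k)%N -> cdot (x a) (normalize g) = 0.
  by move=> ha; rewrite cdot_normalize xg ?mulr0.
have := bessel (orthonormal_rcons hx (normalize_unit g0) xz) (v i).
rewrite big_ord_recr /= ltnn horth // eqxx norm_cdot_normalize gG norm_cdotC g_coef //.
rewrite Pi mul1r lerBrDr; congr (_ + _ <= _); apply: eq_bigr => a _.
by rewrite ltn_ord norm_cdotC.
Qed.

End Frame.

Section Window.
Variables (R : numDomainType) (f q e : nat -> R) (th : R) (s a b t : nat).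
Hypotheses (hsa : (s <= a)%N) (hab : (a <= b)%N) (hbt : (b <= t)%N).
Hypothesis e_ge0 : forall j, (s <= j < t)%N -> 0 <= e j.
Hypothesis e_le : forall j, (a <= j < b)%N -> e j <= 1 - q j.
Hypothesis sum_e : \sum_(s <= j < t) e j = (b - a)%:R.

(* The extremal weights: as large as allowed on the window, zero elsewhere. *)
Let d j := if (a <= j < b)%N then 1 - q j else 0.

Let sum_shift : \sum_(s <= j < t) f j * e j =
  \sum_(s <= j < t) (f j - th) * e j + th * (b - a)%:R.
Proof.
by rewrite -sum_e mulr_sumr -big_split; apply: eq_bigr => j _; rewrite /= mulrBl subrK.
Qed.

Let sum_window : \sum_(s <= j < t) (f j - th) * d j + th * (b - a)%:R =
  \sum_(a <= j < b) f j - \sum_(a <= j < b) q j * (f j - th).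
Proof.
rewrite (big_cat_nat hsa (leq_trans hab hbt)) (big_cat_nat hab hbt) /=.
have out c c' : (c' <= a \/ b <= c)%N -> \sum_(c <= j < c') (f j - th) * d j = 0.
  move=> hcc; apply: big1_seq => j; rewrite mem_index_iota /d => /andP[_ hj].
  by rewrite ifF ?mulr0 //; lia.
rewrite (out s a); last by left.
rewrite (out b t); last by right.
rewrite add0r addr0.
rewrite (eq_big_nat _ _ (F2 := fun j => f j - (th + q j * (f j - th)))); last first.
  by move=> j hj; rewrite /d hj; ring.
by rewrite sumrB big_split /= sumr_const_nat mulr_natr; ring.
Qed.

Lemma sum_le_window :
  (forall j, (a <= j < b)%N -> th <= f j) ->
  (forall j, (b <= j < t)%N -> f j <= th) ->
  (forall j, (s <= j < a)%N -> e j = 0) ->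
  \sum_(s <= j < t) f j * e j <=
  \sum_(a <= j < b) f j - \sum_(a <= j < b) q j * (f j - th).
Proof.
move=> f_in f_out e_out; rewrite sum_shift -sum_window lerD2r.
apply: ler_sum_nat => j hj; rewrite -subr_ge0 -mulrBr /d.
case: (ltnP j a) => ja /=; first by rewrite e_out ?subrr ?mulr0 //; lia.
case: (ltnP j b) => jb.
  by apply: mulr_ge0; rewrite subr_ge0; [apply: f_in | apply: e_le]; lia.
rewrite sub0r mulrN oppr_ge0; apply: mulr_le0_ge0; last by apply: e_ge0; lia.
by rewrite subr_le0; apply: f_out; lia.
Qed.

Lemma window_le_sum :
  (forall j, (s <= j < a)%N -> th <= f j) ->
  (forall j, (a <= j < b)%N -> f j <= th) ->
  (forall j, (b <= j < t)%N -> e j = 0) ->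
  \sum_(a <= j < b) f j - \sum_(a <= j < b) q j * (f j - th) <=
  \sum_(s <= j < t) f j * e j.
Proof.
move=> f_lo f_in e_out; rewrite sum_shift -sum_window lerD2r.
apply: ler_sum_nat => j hj; rewrite -subr_ge0 -mulrBr /d.
case: (ltnP j a) => ja /=.
  rewrite subr0; apply: mulr_ge0; last by apply: e_ge0; lia.
  by rewrite subr_ge0; apply: f_lo; lia.
case: (ltnP j b) => jb; last by rewrite e_out ?subrr ?mulr0 //; lia.
by apply: mulr_le0; rewrite subr_le0; [apply: f_in | apply: e_le]; lia.
Qed.

End Window.

Lemma sum_nat_indicator (R : pzSemiRingType) (P : pred nat) (F : nat -> R) m n :
  \sum_(m <= i < n) (P i)%:R * F i = \sum_(m <= i < n | P i) F i.
Proof.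
by rewrite [RHS]big_mkcond; apply: eq_bigr => i _; case: (P i); rewrite ?mul1r ?mul0r.
Qed.

Lemma nonincreasing_le (R : numDomainType) (g : nat -> R) N :
  (forall i, (1 <= i)%N -> (i < N)%N -> g i.+1 <= g i) ->
  forall i j, (1 <= i <= j)%N -> (j <= N)%N -> g j <= g i.
Proof.
move=> hg i j /andP[i1 ij] jN; elim: j ij jN => [|j IH]; first by lia.
rewrite leq_eqVlt => /orP[/eqP <- //|]; rewrite ltnS => ij jN.
by apply: le_trans (hg _ _ _) (IH _ _); lia.
Qed.

Section Bounds.
Variables (C : numClosedFieldType) (n : nat) (A : 'M[C]_n).
Variables (lam mu : nat -> C) (v y : nat -> 'cV[C]_n) (u : 'cV[C]_n).
Hypothesis heig : forall i, (1 <= i <= n)%N -> A *m v i = lam i *: v i.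
Hypothesis horth : forall i j, (1 <= i <= n)%N -> (1 <= j <= n)%N ->
  cdot (v i) (v j) = (i == j)%:R.
Hypothesis hu : cdot u u = 1.
Hypothesis hyy : forall j k, (1 <= j < n)%N -> (1 <= k < n)%N ->
  cdot (y j) (y k) = (j == k)%:R.
Hypothesis hyu : forall j, (1 <= j < n)%N -> cdot (y j) u = 0.
Hypothesis hyA : forall j k, (1 <= j < n)%N -> (1 <= k < n)%N ->
  cdot (A *m y j) (y k) = (j == k)%:R * mu j.
Hypothesis hlam : forall i, (1 <= i)%N -> (i < n)%N -> lam i.+1 <= lam i.
Hypothesis hmu : forall j, (1 <= j)%N -> (j < n.-1)%N -> mu j.+1 <= mu j.
Variables (l r : nat).
Hypotheses (hl : (1 <= l)%N) (hlr : (l <= r)%N) (hr : (r <= n.-1)%N).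

Let w i := `|cdot u (v i)| ^+ 2.
Let lam_le := nonincreasing_le hlam.
Let mu_le := nonincreasing_le hmu.

Lemma sum_mu_ge : \sum_(1 <= i < r.+2) w i != 0 ->
  \sum_(l <= j < r.+1) lam j.+1
    + \sum_(l <= j < r.+1) (w j.+1 / \sum_(1 <= i < r.+2) w i) * (lam l - lam j.+1)
  <= \sum_(l <= j < r.+1) mu j.
Proof.
set L := \sum_(1 <= i < r.+2) w i => L0.
pose s := u :: [seq y j | j <- index_iota 1 l] ++ [seq v i | i <- index_iota r.+2 n.+1].
have size_s : (size s + (r.+1 - l) <= n)%N.
  by rewrite /= size_cat !size_map !size_iota; lia.
have [x [hx hxs]] := exists_orthonormal_orthogonal size_s.
have hxu a : (a < r.+1 - l)%N -> cdot (x a) u = 0.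
  by move=> ha; apply: hxs; rewrite ?mem_head.
have hxy a j : (a < r.+1 - l)%N -> (1 <= j < l)%N -> cdot (x a) (y j) = 0.
  move=> ha hj; apply: hxs => //.
  by rewrite inE mem_cat (map_f y) ?orbT // mem_index_iota.
have hxv a i : (a < r.+1 - l)%N -> (1 <= i <= n)%N -> ~~ (i <= r.+1)%N ->
    cdot (x a) (v i) = 0.
  move=> ha hi hir; apply: hxs => //.
  by rewrite inE mem_cat (map_f v) ?orbT // mem_index_iota; lia.
have L_ind : \sum_(1 <= i < n.+1) (i <= r.+1)%N%:R * w i = L.
  by rewrite sum_nat_indicator /L [RHS](big_nat_widen _ _ n.+1) //; lia.
have fw_v_le := frame_weight_v_le horth hx hxu hxv; rewrite L_ind in fw_v_le.
apply: (@le_trans _ _ (\sum_(1 <= i < n.+1) lam i * frame_weight (r.+1 - l) x (v i))).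
  have -> : \sum_(l <= j < r.+1) lam j.+1
      + \sum_(l <= j < r.+1) (w j.+1 / L) * (lam l - lam j.+1) =
      \sum_(l.+1 <= j < r.+2) lam j
        - \sum_(l.+1 <= j < r.+2) (w j / L) * (lam j - lam l).
    rewrite !big_add1 /= -sumrN; congr (_ + _).
    by apply: eq_bigr => j _; rewrite -mulrN opprB.
  apply: (window_le_sum (th := lam l)) => //; try lia.
  - by move=> i _; apply: frame_weight_ge0.
  - by move=> i hi; apply: fw_v_le; lia.
  - by rewrite (sum_frame_weight_v horth hx) subSS.
  - by move=> j hj; apply: lam_le; lia.
  - by move=> j hj; apply: lam_le; lia.
  - by move=> i hi; apply: frame_weight_eq0 => a ha; apply: hxv; lia.
rewrite -(frame_trace heig horth hu hyy hyu hyA hxu).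
apply: le_trans (@sum_le_window _ mu (fun=> 0) _ (mu r) 1 l r.+1 n _ _ _ _ _ _ _ _ _) _;
  try lia.
- by move=> j _; apply: frame_weight_ge0.
- by move=> j hj; rewrite subr0 (frame_weight_le1 hx) // hyy ?eqxx //; lia.
- exact: (sum_frame_weight_y hu hyy hyu hx hxu).
- by move=> j hj; apply: mu_le; lia.
- by move=> j hj; apply: mu_le; lia.
- by move=> j hj; apply: frame_weight_eq0 => a ha; apply: hxy; lia.
- by rewrite [X in _ - X]big1 ?subr0 // => j _; rewrite mul0r.
Qed.

Lemma sum_mu_le : \sum_(l <= i < n.+1) w i != 0 ->
  \sum_(l <= j < r.+1) mu j <=
  \sum_(l <= j < r.+1) lam j
    - \sum_(l <= j < r.+1) (w j / \sum_(l <= i < n.+1) w i) * (lam j - lam r.+1).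
Proof.
set U := \sum_(l <= i < n.+1) w i => U0.
pose s := u :: [seq v i | i <- index_iota 1 l] ++ [seq y j | j <- index_iota r.+1 n].
have size_s : (size s + (r.+1 - l) <= n)%N.
  by rewrite /= size_cat !size_map !size_iota; lia.
have [x [hx hxs]] := exists_orthonormal_orthogonal size_s.
have hxu a : (a < r.+1 - l)%N -> cdot (x a) u = 0.
  by move=> ha; apply: hxs; rewrite ?mem_head.
have hxv a i : (a < r.+1 - l)%N -> (1 <= i <= n)%N -> ~~ (l <= i)%N ->
    cdot (x a) (v i) = 0.
  move=> ha hi hil; apply: hxs => //.
  by rewrite inE mem_cat (map_f v) ?orbT // mem_index_iota; lia.
have hxy a j : (a < r.+1 - l)%N -> (r < j < n)%N -> cdot (x a) (y j) = 0.
  move=> ha hj; apply: hxs => //.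
  by rewrite inE mem_cat (map_f y) ?orbT // mem_index_iota.
have U_ind : \sum_(1 <= i < n.+1) (l <= i)%N%:R * w i = U.
  by rewrite sum_nat_indicator /U [RHS](big_nat_widenl _ 1).
have fw_v_le := frame_weight_v_le horth hx hxu hxv; rewrite U_ind in fw_v_le.
apply: (@le_trans _ _ (\sum_(1 <= j < n) mu j * frame_weight (r.+1 - l) x (y j))).
  apply: le_trans _
    (@window_le_sum _ mu (fun=> 0) _ (mu l) 1 l r.+1 n _ _ _ _ _ _ _ _ _);
    try lia.
  - by rewrite [X in _ - X]big1 ?subr0 // => j _; rewrite mul0r.
  - by move=> j _; apply: frame_weight_ge0.
  - by move=> j hj; rewrite subr0 (frame_weight_le1 hx) // hyy ?eqxx //; lia.
  - exact: (sum_frame_weight_y hu hyy hyu hx hxu).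
  - by move=> j hj; apply: mu_le; lia.
  - by move=> j hj; apply: mu_le; lia.
  - by move=> j hj; apply: frame_weight_eq0 => a ha; apply: hxy.
rewrite (frame_trace heig horth hu hyy hyu hyA hxu).
apply: (sum_le_window (th := lam r.+1)) => //; try lia.
- by move=> i _; apply: frame_weight_ge0.
- by move=> i hi; apply: fw_v_le; lia.
- exact: (sum_frame_weight_v horth hx).
- by move=> j hj; apply: lam_le; lia.
- by move=> j hj; apply: lam_le; lia.
- by move=> i hi; apply: frame_weight_eq0 => a ha; apply: hxv; lia.
Qed.

End Bounds.

Theorem theorem3p2 (C : numClosedFieldType) (n : nat) (hn : (2 <= n)%N)
  (A : 'M[C]_n) (hA : ctrmx A = A)
  (lam : nat -> C) (v : nat -> 'cV[C]_n)
  (hlam_sorted : forall i, (1 <= i)%N -> (i < n)%N -> lam i.+1 <= lam i)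
  (heig : forall i, (1 <= i <= n)%N -> A *m v i = lam i *: v i)
  (horth : forall i j, (1 <= i <= n)%N -> (1 <= j <= n)%N ->
     cdot (v i) (v j) = (i == j)%:R)
  (u : 'cV[C]_n) (hu : cdot u u = 1)
  (U : 'M[C]_(n, n.-1)) (hU : ctrmx U *m U = 1%:M) (hUu : ctrmx U *m u = 0)
  (mu : nat -> C)
  (hmu_sorted : forall j, (1 <= j)%N -> (j < n.-1)%N -> mu j.+1 <= mu j)
  (hmu : char_poly (compression A U) = \prod_(1 <= j < n) ('X - (mu j)%:P))
  (l r : nat) (hl : (1 <= l)%N) (hlr : (l <= r)%N) (hr : (r <= n.-1)%N)
  (hUl : \sum_(l <= i < n.+1) `|cdot u (v i)| ^+ 2 != 0)
  (hLr : \sum_(1 <= i < r.+2) `|cdot u (v i)| ^+ 2 != 0) :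
  let Ul := \sum_(l <= i < n.+1) `|cdot u (v i)| ^+ 2 in
  let Lr := \sum_(1 <= i < r.+2) `|cdot u (v i)| ^+ 2 in
  \sum_(l <= j < r.+1) lam j.+1
    + \sum_(l <= j < r.+1) (`|cdot u (v j.+1)| ^+ 2 / Lr) * (lam l - lam j.+1)
  <= \sum_(l <= j < r.+1) mu j
  /\
  \sum_(l <= j < r.+1) mu j
  <= \sum_(l <= j < r.+1) lam j
     - \sum_(l <= j < r.+1) (`|cdot u (v j)| ^+ 2 / Ul) * (lam j - lam r.+1).
Proof.
move=> Ul Lr.
have [y [hyy hyu hyA]] := compression_eigenbasis hA hU hUu hmu.
split.
- exact (sum_mu_ge heig horth hu hyy hyu hyA hlam_sorted hmu_sorted hl hlr hr hLr).
- exact (sum_mu_le heig horth hu hyy hyu hyA hlam_sorted hmu_sorted hl hlr hr hUl).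
Qed.
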